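(* The first-price-or-free mechanism satisfies $c$-SCP for every integer $c\ge1$.
   Context: Setting (TFM), with unbounded block size. Each user $i$ has a true value $v_i\ge0$ and submits a single bid $b_i\ge0$. A TFM consists of an inclusion rule (run by the miner) and confirmation, payment and miner-revenue rules (run by the blockchain on the included bids). First-price-or-free mechanism: include all bids; let $b_1\ge\dots\ge b_m$ be the included bids. Only the highest bid $b_1$ is confirmed. If $m=1$, the confirmed user pays nothing; if $m\ge2$, the confirmed user pays $b_1$. The miner receives all payment. Strategic players: the miner together with some users may have those users bid untruthfully after seeing all other bids, inject fake bids (true value $0$), and include any set of available bids instead of following the inclusion rule. Utility of a coalition: miner revenue plus $v-p$ for each confirmed transaction of the coalition with true value $v$ and payment $p$. $c$-SCP: for every coalition of the miner with between $1$ and $c$ users, the joint utility is maximized when its users bid truthfully and the miner follows the mechanism, whatever the other users' bids. *)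

From HB Require Import structures.
From mathcomp Require Import all_boot all_order all_algebra.
Set Implicit Arguments. Unset Strict Implicit. Unset Printing Implicit Defensive.
Import Order.TTheory GRing.Theory Num.Theory.
Local Open Scope ring_scope.

(** Owner of an included bid, as seen by the strategic coalition:
    - [Outside i] : the (honest) bid of the i-th non-coalition user;
    - [Member j]  : the bid of the j-th coalition user;
    - [Fake]      : a fake bid injected by the coalition (true value 0). *)
Inductive owner := Outside of nat | Member of nat | Fake.

Definition owner_enc (o : owner) : option (nat + nat) :=
  match o with Outside i => Some (inl i) | Member j => Some (inr j) | Fake => None end.
Definition owner_dec (x : option (nat + nat)) : owner :=
  match x with Some (inl i) => Outside i | Some (inr j) => Member j | None => Fake end.
Lemma owner_encK : cancel owner_enc owner_dec. Proof. by case. Qed.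
HB.instance Definition _ := Equality.copy owner (can_type owner_encK).

Section TFM.
Variable R : realFieldType.

Record tfm := TFM {
  confirm : seq R -> nat -> bool;
  pay : seq R -> nat -> R;
  miner_rev : seq R -> R }.

(** First-price-or-free: the confirmed position is the first position
    holding a maximal bid (ties broken by position in the block). *)
Definition top_index (bs : seq R) : nat :=
  find (fun b => all (fun b' => b' <= b) bs) bs.

Definition fpof_confirm (bs : seq R) (k : nat) : bool :=
  (k < size bs)%N && (k == top_index bs).

Definition fpof_pay (bs : seq R) (k : nat) : R :=
  if (size bs <= 1)%N then 0 else nth 0 bs k.

Definition fpof_rev (bs : seq R) : R :=
  \sum_(k < size bs | fpof_confirm bs k) fpof_pay bs k.

Definition fpof : tfm := TFM fpof_confirm fpof_pay fpof_rev.

Definition coal_value (vals : seq R) (o : owner) : R :=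
  match o with Member j => nth 0 vals j | _ => 0 end.

Definition is_coal (o : owner) : bool :=
  match o with Outside _ => false | _ => true end.

Definition coal_utility (M : tfm) (vals : seq R) (d : seq (owner * R)) : R :=
  let bs := map snd d in
  miner_rev M bs +
  \sum_(k < size d | confirm M bs k && is_coal (nth Fake (map fst d) k))
     (coal_value vals (nth Fake (map fst d) k) - pay M bs k).

Definition outside_ids (d : seq (owner * R)) : seq nat :=
  pmap (fun x => if x.1 is Outside i then Some i else None) d.
Definition member_ids (d : seq (owner * R)) : seq nat :=
  pmap (fun x => if x.1 is Member j then Some j else None) d.

(** Blocks the strategic coalition can produce: any subset of the available
    outside bids (unchanged, each at most once), at most one (arbitrary,
    nonnegative) bid per coalition user, and any number of nonnegative fake
    bids, in any order. *)
Definition admissible (vals others : seq R) (d : seq (owner * R)) : Prop :=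
  [/\ uniq (outside_ids d), uniq (member_ids d) &
      forall x, x \in d ->
        match x.1 with
        | Outside i => (i < size others)%N /\ x.2 = nth 0 others i
        | Member j => (j < size vals)%N /\ 0 <= x.2
        | Fake => 0 <= x.2
        end].

(** Honest play: coalition users bid truthfully, the miner includes all
    bids (the inclusion rule "include all"), in any order. *)
Definition honest_bids (vals others : seq R) : seq (owner * R) :=
  [seq (Member j, nth 0 vals j) | j <- iota 0 (size vals)] ++
  [seq (Outside i, nth 0 others i) | i <- iota 0 (size others)].

(** c-side-contract-proofness (c-SCP) of a TFM whose inclusion rule is
    "include all bids". *)
Definition c_SCP (M : tfm) (c : nat) : Prop :=
  forall (vals others : seq R),
    (1 <= size vals <= c)%N ->
    all (fun v => 0 <= v) vals ->
    all (fun b => 0 <= b) others ->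
    forall h d : seq (owner * R),
      perm_eq h (honest_bids vals others) ->
      admissible vals others d ->
      coal_utility M vals d <= coal_utility M vals h.

End TFM.

(** Under first-price-or-free the coalition's utility depends only on the top
    bid of the block: it is that bid's true value if the coalition owns it,
    and its payment otherwise.  The honest block contains every bid, so its
    top bid is the overall maximum [T], and it is worth exactly [T]: a top
    coalition bid is truthful, and a top outside bid pays its bid since the
    block then holds at least two bids.  In any other block the top bid is
    worth a coalition value, an outside bid, or [0] (fake bids, empty block),
    all of which are at most [T]. *)

From mathcomp Require Import all_boot all_order all_algebra.
Import Order.TTheory GRing.Theory Num.Theory.
Local Open Scope ring_scope.
Set Implicit Arguments. Unset Strict Implicit.

Section FirstPriceOrFree.
Variable R : realFieldType.
Implicit Types (bs vals others : seq R) (d : seq (owner * R)).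

Lemma seq_max_exists bs :
  bs != [::] -> exists2 m, m \in bs & all (fun b => b <= m) bs.
Proof.
elim: bs => // x [|y s] IH _; first by exists x; rewrite ?mem_seq1 //= lexx.
have [m ms hm] := IH isT.
have [xm | mx] := leP x m.
  by exists m; [rewrite inE ms orbT | rewrite /= xm].
exists x; first by rewrite inE eqxx.
apply/allP => z; rewrite inE => /orP[/eqP-> | zs]; first exact: lexx.
exact: le_trans (allP hm z zs) (ltW mx).
Qed.

Lemma top_indexP bs : bs != [::] ->
  (top_index bs < size bs)%N /\ all (fun b => b <= nth 0 bs (top_index bs)) bs.
Proof.
move=> /seq_max_exists[m ms hm].
have has_top : has (fun b => all (fun b' => b' <= b) bs) bs by apply/hasP; exists m.
by split; [rewrite /top_index -has_find | exact: (nth_find 0 has_top)].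
Qed.

Lemma big_fpof_confirm bs (P : pred nat) (F : nat -> R) : bs != [::] ->
  \sum_(k < size bs | fpof_confirm bs k && P k) F k =
  if P (top_index bs) then F (top_index bs) else 0.
Proof.
move=> /top_indexP[top_lt _].
rewrite big_mkcond (bigD1 (Ordinal top_lt)) //= big1 ?addr0.
  by rewrite /fpof_confirm top_lt eqxx.
by move=> k; rewrite -val_eqE /= /fpof_confirm => /negbTE->; rewrite andbF.
Qed.

Lemma fpof_utility vals d : d != [::] ->
  let t := top_index (map snd d) in
  let o := nth Fake (map fst d) t in
  coal_utility (fpof R) vals d =
  if is_coal o then coal_value vals o else fpof_pay (map snd d) t.
Proof.
move=> d0 t o; have bs0 : map snd d != [::] by case: d d0 {t o}.
rewrite /coal_utility /= /fpof_rev.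
rewrite (eq_bigl (fun k : 'I_(size (map snd d)) =>
  fpof_confirm (map snd d) k && predT (k : nat))) => [|k]; last by rewrite andbT.
rewrite -(size_map snd d) (big_fpof_confirm _ _ bs0).
have /= -> := big_fpof_confirm (fun k => is_coal (nth Fake (map fst d) k))
  (fun k => coal_value vals (nth Fake (map fst d) k) - fpof_pay (map snd d) k) bs0.
by case: ifP => _; rewrite ?addr0 // addrC subrK.
Qed.

Lemma fpof_utility_le_bound vals others d (B : R) :
  admissible vals others d -> 0 <= B ->
  (forall j, (j < size vals)%N -> nth 0 vals j <= B) ->
  (forall i, (i < size others)%N -> nth 0 others i <= B) ->
  coal_utility (fpof R) vals d <= B.
Proof.
move=> [_ _ hadm] B0 val_le bid_le.
have [-> | d0] := eqVneq d [::].
  by rewrite /coal_utility /= /fpof_rev !big_ord0 addr0.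
have bs0 : map snd d != [::] by case: d d0 {hadm}.
have [top_lt _] := top_indexP bs0.
rewrite size_map in top_lt.
rewrite fpof_utility // (nth_map (Fake, 0)) //.
have := hadm _ (mem_nth (Fake, 0) top_lt).
case Etop: (nth (Fake, 0) d _) => [[i | j |] b] /=.
- move=> [i_lt bid_i]; rewrite /fpof_pay; case: ifP => _ //.
  by rewrite (nth_map (Fake, 0)) // Etop bid_i; exact: bid_le.
- by move=> [j_lt _]; exact: val_le.
- by [].
Qed.

Lemma mem_honest_bids vals others x :
  (x \in honest_bids vals others) =
  (x \in [seq (Member j, nth 0 vals j) | j <- iota 0 (size vals)])
  || (x \in [seq (Outside i, nth 0 others i) | i <- iota 0 (size others)]).
Proof. exact: mem_cat. Qed.

Lemma size_honest_bids vals others :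
  size (honest_bids vals others) = (size vals + size others)%N.
Proof. by rewrite size_cat !size_map !size_iota. Qed.

Lemma fpof_utility_honest vals others h :
  (0 < size vals)%N -> perm_eq h (honest_bids vals others) ->
  let bs := map snd h in
  coal_utility (fpof R) vals h = nth 0 bs (top_index bs).
Proof.
move=> vals0 hperm bs.
have bs0 : bs != [::].
  by rewrite -size_eq0 size_map (perm_size hperm) size_honest_bids -lt0n ltn_addr.
have h0 : h != [::] by apply: contra_neq bs0; rewrite /bs => ->.
have [top_lt _] := top_indexP bs0.
rewrite size_map in top_lt.
rewrite fpof_utility // /fpof_pay /bs size_map !(nth_map (Fake, 0)) //.
have := mem_nth (Fake, 0) top_lt; rewrite (perm_mem hperm) mem_honest_bids.
case/orP => /mapP[k]; rewrite mem_iota add0n => /andP[_ k_lt] -> //=.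
have h_gt1 : (1 < size h)%N.
  rewrite (perm_size hperm) size_honest_bids.
  exact: leq_add vals0 (leq_ltn_trans (leq0n k) k_lt).
by rewrite leqNgt h_gt1.
Qed.

Lemma honest_top_bid_ge vals others h :
  (0 < size vals)%N -> perm_eq h (honest_bids vals others) ->
  let bs := map snd h in let T := nth 0 bs (top_index bs) in
  (forall j, (j < size vals)%N -> nth 0 vals j <= T) /\
  (forall i, (i < size others)%N -> nth 0 others i <= T).
Proof.
move=> vals0 hperm bs T.
have bs0 : bs != [::].
  by rewrite -size_eq0 size_map (perm_size hperm) size_honest_bids -lt0n ltn_addr.
have [_ T_max] := top_indexP bs0.
have honest_le_T x : x \in honest_bids vals others -> x.2 <= T.
  by rewrite -(perm_mem hperm) => xh; apply: (allP T_max); exact: map_f.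
split=> [j j_lt | i i_lt].
- apply: (honest_le_T (Member j, _)); rewrite mem_honest_bids.
  by apply/orP; left; apply/mapP; exists j; rewrite ?mem_iota.
- apply: (honest_le_T (Outside i, _)); rewrite mem_honest_bids.
  by apply/orP; right; apply/mapP; exists i; rewrite ?mem_iota.
Qed.

End FirstPriceOrFree.

Theorem mainTheorem9 (R : realFieldType) (c : nat) :
  (1 <= c)%N -> c_SCP (fpof R) c.
Proof.
move=> _ vals others /andP[vals0 _] vals_ge0 _ h d hperm d_adm.
rewrite (fpof_utility_honest vals0 hperm).
have [val_le bid_le] := honest_top_bid_ge vals0 hperm.
apply: (fpof_utility_le_bound d_adm _ val_le bid_le).
exact: le_trans (allP vals_ge0 _ (mem_nth 0 vals0)) (val_le 0%N vals0).
Qed.
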